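(* Suppose that $$\forall\,\varepsilon>0\;\exists\,\delta>0\ \text{such that}\ j(\varphi,\psi)\le\varepsilon\ \ \forall\,(\varphi,\psi)\in U_+\ \text{with}\ \|\varphi\|_0\le\delta ,$$ and that $j(\varphi,0)>0$ whenever $\varphi$ is a strictly positive constant function. Then for every solution $x=(w,v)^\phi$, $\phi\in X_+$, of $w'(t)=q(v(t))w(t)$, $v'(t)=j(w_t,v_t)-\mu v(t)$ one has $x_t\to0$ as $t\to\infty$ in both the $C$-norm and the $C^1$-norm.
   Context: Let $h>0$, $R_-<0$, $I=(R_-,\infty)$, $q:I\to\mathbb{R}$, $\mu>0$, $U=C^1([-h,0],\mathbb{R})\times C^1([-h,0],I)$, $j:U\to\mathbb{R}$, $U_+=C^1([-h,0],\mathbb{R}_+^2)$, $\|\cdot\|_0$ the sup-norm, $\|\phi\|_1=\|\phi\|_0+\|\phi'\|_0$; $x_t(s)=x(t+s)$. Define $F(\varphi,\psi)=(q(\psi(0))\varphi(0),\,j(\varphi,\psi)-\mu\psi(0))$ and $X_+=\{\phi\in C^1([-h,0],\mathbb{R}_+^2):\phi'(0)=F(\phi)\}\neq\emptyset$. Assume: $j$ is $C^1$ on $U$ with each derivative extending to a linear map on $C([-h,0],\mathbb{R}^2)$ depending continuously on $(\phi,\chi)$; for every bounded $B\subset U_+$ there is $L_B$ with $|j(\phi)-j(\chi)|\le L_B\|\phi-\chi\|_0$ on $B$; $j\ge0$ on $U_+$; $j(B_1\times B_2)$ is bounded whenever $B_1\times B_2\subset U_+$ with $B_1$ bounded; $q$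 is bounded and $C^1$; and $q(s)<0$ for all $s>0$. Solutions from $X_+$ exist globally and remain nonnegative. *)

From Stdlib Require Export Reals.
From Coquelicot Require Export Coquelicot.
Open Scope R_scope.

(** Functions on [-h,0] (and on [-h,oo)) are represented by total functions
    R -> R; only their values on the relevant interval matter.  Elements of
    C^1 spaces are carried together with their derivative function. *)

Definition seg (h : R) : R -> Prop := fun s => -h <= s <= 0.

Definition has_deriv_within (D : R -> Prop) (f f' : R -> R) (x : R) : Prop :=
  filterlim (fun y => (f y - f x) / (y - x))
    (within (fun y => D y /\ y <> x) (locally x)) (locally (f' x)).

Definition cont_within (D : R -> Prop) (f : R -> R) (x : R) : Prop :=
  filterlim f (within D (locally x)) (locally (f x)).

Definition C0_on (D : R -> Prop) (f : R -> R) : Prop :=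
  forall x, D x -> cont_within D f x.

Definition C1_on (D : R -> Prop) (f f' : R -> R) : Prop :=
  forall x, D x -> has_deriv_within D f f' x /\ cont_within D f' x.

Definition norm0 (h : R) (f : R -> R) : R :=
  real (Lub_Rbar (fun r => exists s, seg h s /\ r = Rabs (f s))).

Definition norm0p (h : R) (f g : R -> R) : R :=
  norm0 h (fun s => Rmax (Rabs (f s)) (Rabs (g s))).

Definition norm1p (h : R) (f df g dg : R -> R) : R :=
  norm0p h f g + norm0p h df dg.

Definition inU (h Rm : R) (p dp r dr : R -> R) : Prop :=
  C1_on (seg h) p dp /\ C1_on (seg h) r dr /\ (forall s, seg h s -> Rm < r s).

Definition inUplus (h : R) (p dp r dr : R -> R) : Prop :=
  C1_on (seg h) p dp /\ C1_on (seg h) r dr /\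
  (forall s, seg h s -> 0 <= p s /\ 0 <= r s).

Definition inC (h : R) (k l : R -> R) : Prop := C0_on (seg h) k /\ C0_on (seg h) l.

Definition inXplus (h mu : R) (q : R -> R) (j : (R -> R) -> (R -> R) -> R)
    (p dp r dr : R -> R) : Prop :=
  inUplus h p dp r dr /\ dp 0 = q (r 0) * p 0 /\ dr 0 = j p r - mu * r 0.

Definition j_welldef (h : R) (j : (R -> R) -> (R -> R) -> R) : Prop :=
  forall p1 r1 p2 r2, (forall s, seg h s -> p1 s = p2 s /\ r1 s = r2 s) ->
    j p1 r1 = j p2 r2.

Definition j_smooth_ext (h Rm : R) (j : (R -> R) -> (R -> R) -> R) : Prop :=
  exists De : (R -> R) -> (R -> R) -> (R -> R) -> (R -> R) -> R,
  (forall p1 r1 p2 r2 k1 l1 k2 l2,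
     (forall s, seg h s -> p1 s = p2 s /\ r1 s = r2 s /\ k1 s = k2 s /\ l1 s = l2 s) ->
     De p1 r1 k1 l1 = De p2 r2 k2 l2) /\
  (forall p dp r dr, inU h Rm p dp r dr ->
     forall k1 l1 k2 l2 a b, inC h k1 l1 -> inC h k2 l2 ->
     De p r (fun s => a * k1 s + b * k2 s) (fun s => a * l1 s + b * l2 s)
       = a * De p r k1 l1 + b * De p r k2 l2) /\
  (forall p dp r dr, inU h Rm p dp r dr ->
     forall eps, 0 < eps -> exists del, 0 < del /\
     forall k dk l dl, C1_on (seg h) k dk -> C1_on (seg h) l dl ->
       norm1p h k dk l dl < del ->
       inU h Rm (fun s => p s + k s) (fun s => dp s + dk s)
                (fun s => r s + l s) (fun s => dr s + dl s) ->
       Rabs (j (fun s => p s + k s) (fun s => r s + l s) - j p r - De p r k l)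
         <= eps * norm1p h k dk l dl) /\
  (* u |-> Dj(u) is continuous into L(C^1,R) (operator norm) *)
  (forall p dp r dr, inU h Rm p dp r dr ->
     forall eps, 0 < eps -> exists del, 0 < del /\
     forall p' dp' r' dr', inU h Rm p' dp' r' dr' ->
       norm1p h (fun s => p' s - p s) (fun s => dp' s - dp s)
                (fun s => r' s - r s) (fun s => dr' s - dr s) < del ->
       forall k dk l dl, C1_on (seg h) k dk -> C1_on (seg h) l dl ->
         Rabs (De p' r' k l - De p r k l) <= eps * norm1p h k dk l dl) /\
  (forall p dp r dr k l, inU h Rm p dp r dr -> inC h k l ->
     forall eps, 0 < eps -> exists del, 0 < del /\
     forall p' dp' r' dr' k' l', inU h Rm p' dp' r' dr' -> inC h k' l' ->
       norm1p h (fun s => p' s - p s) (fun s => dp' s - dp s)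
                (fun s => r' s - r s) (fun s => dr' s - dr s) < del ->
       norm0p h (fun s => k' s - k s) (fun s => l' s - l s) < del ->
       Rabs (De p' r' k' l' - De p r k l) < eps).

Definition j_loc_lip (h : R) (j : (R -> R) -> (R -> R) -> R) : Prop :=
  forall M, exists L, forall p dp r dr p' dp' r' dr',
    inUplus h p dp r dr -> inUplus h p' dp' r' dr' ->
    norm1p h p dp r dr <= M -> norm1p h p' dp' r' dr' <= M ->
    Rabs (j p r - j p' r') <= L * norm0p h (fun s => p s - p' s) (fun s => r s - r' s).

Definition j_nonneg (h : R) (j : (R -> R) -> (R -> R) -> R) : Prop :=
  forall p dp r dr, inUplus h p dp r dr -> 0 <= j p r.

Definition j_bdd_images (h : R) (j : (R -> R) -> (R -> R) -> R) : Prop :=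
  forall (B1 B2 : (R -> R) -> (R -> R) -> Prop),
    (forall p dp, B1 p dp -> C1_on (seg h) p dp /\ forall s, seg h s -> 0 <= p s) ->
    (forall r dr, B2 r dr -> C1_on (seg h) r dr /\ forall s, seg h s -> 0 <= r s) ->
    (exists M, forall p dp, B1 p dp -> norm0 h p + norm0 h dp <= M) ->
    exists K, forall p dp r dr, B1 p dp -> B2 r dr -> Rabs (j p r) <= K.

Definition is_solution (h Rm mu : R) (q : R -> R) (j : (R -> R) -> (R -> R) -> R)
    (w dw v dv : R -> R) : Prop :=
  C1_on (fun t => -h <= t) w dw /\ C1_on (fun t => -h <= t) v dv /\
  (forall t, -h <= t -> Rm < v t) /\
  (forall t, 0 <= t ->
     dw t = q (v t) * w t /\
     dv t = j (fun s => w (t + s)) (fun s => v (t + s)) - mu * v t).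

From Stdlib Require Import Lra Classical.

(* Since [q <= 0] on [0, oo) and [w >= 0], the equation [w' = q(v) w] makes [w]
   nonincreasing, so [w] converges to some [l >= 0]; comparison with [v' <= K - mu v]
   keeps [v] bounded.  If [l > 0], then [q(v) <= -m < 0] whenever [v] is not small,
   and [w] could not settle down: hence [v -> 0].  Local Lipschitz continuity of [j]
   then gives [j(w_t, v_t) -> j(l, 0) > 0], so [v' -> j(l, 0) > 0], contradicting the
   boundedness of [v].  Thus [w -> 0], hence [j(w_t, v_t) -> 0], and comparison gives
   [v -> 0]; the derivatives follow from [|w'| <= Q w] and [v' = j(w_t, v_t) - mu v]. *)

Lemma norm0_le (h M : R) (f : R -> R) : 0 <= h ->
  (forall s, seg h s -> Rabs (f s) <= M) -> 0 <= norm0 h f <= M.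
Proof.
  intros Hh Hf. unfold norm0.
  set (E := fun r => exists s, seg h s /\ r = Rabs (f s)).
  destruct (Lub_Rbar_correct E) as [Hub Hlub].
  assert (H0 : Rbar_le (Rabs (f 0)) (Lub_Rbar E)).
  { apply Hub. exists 0. split; [unfold seg; lra | reflexivity]. }
  assert (HM : Rbar_le (Lub_Rbar E) M).
  { apply Hlub. intros x [s [Hs ->]]. apply Hf, Hs. }
  destruct (Lub_Rbar E) as [l | |]; simpl in *; try contradiction.
  pose proof (Rabs_pos (f 0)). lra.
Qed.

Lemma norm0p_le (h M : R) (f g : R -> R) : 0 <= h ->
  (forall s, seg h s -> Rabs (f s) <= M /\ Rabs (g s) <= M) -> 0 <= norm0p h f g <= M.
Proof.
  intros Hh Hfg. apply norm0_le; [exact Hh |]. intros s Hs.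
  destruct (Hfg s Hs) as [Hf Hg].
  rewrite Rabs_pos_eq by (eapply Rle_trans; [apply Rabs_pos | apply Rmax_l]).
  apply Rmax_lub; assumption.
Qed.

Lemma is_lim_norm0p_history (h : R) (f g : R -> R) : 0 <= h ->
  is_lim f p_infty 0 -> is_lim g p_infty 0 ->
  is_lim (fun t => norm0p h (fun s => f (t + s)) (fun s => g (t + s))) p_infty 0.
Proof.
  intros Hh Hf Hg. apply is_lim_spec in Hf, Hg. apply is_lim_spec. intros eps.
  destruct (Hf (pos_div_2 eps)) as [Mf HMf]. destruct (Hg (pos_div_2 eps)) as [Mg HMg].
  simpl in HMf, HMg.
  exists (Rmax Mf Mg + h). intros t Ht.
  pose proof (Rmax_l Mf Mg). pose proof (Rmax_r Mf Mg). pose proof (cond_pos eps).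
  destruct (norm0p_le h (eps / 2) (fun s => f (t + s)) (fun s => g (t + s)) Hh).
  - intros s Hs. unfold seg in Hs.
    specialize (HMf (t + s) ltac:(lra)). specialize (HMg (t + s) ltac:(lra)).
    rewrite Rminus_0_r in HMf, HMg. lra.
  - simpl. rewrite Rminus_0_r, Rabs_pos_eq; lra.
Qed.

Lemma is_derive_of_has_deriv_within (D : R -> Prop) (f df : R -> R) (x : R) :
  locally x D -> has_deriv_within D f df x -> is_derive f x (df x).
Proof.
  intros [d HD] Hf. apply is_derive_Reals. intros eps Heps.
  destruct (proj1 (filterlim_locally _ _) Hf (mkposreal eps Heps)) as [del Hdel].
  assert (Hmin : 0 < Rmin del d) by (apply Rmin_pos; apply cond_pos).
  exists (mkposreal _ Hmin). intros k Hk0 Hk. simpl in Hk.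
  pose proof (Rmin_l del d). pose proof (Rmin_r del d).
  assert (Hball : forall e : R, Rabs k < e -> ball x e (x + k)).
  { intros e He. change (Rabs (x + k - x) < e). replace (x + k - x) with k by ring. exact He. }
  specialize (Hdel (x + k) (Hball del ltac:(lra))).
  assert (Hxk : D (x + k) /\ x + k <> x) by (split; [apply HD, Hball; lra | lra]).
  specialize (Hdel Hxk). change (Rabs ((f (x + k) - f x) / (x + k - x) - df x) < eps) in Hdel.
  replace (x + k - x) with k in Hdel by ring. exact Hdel.
Qed.

Lemma locally_halfline (a x : R) : a < x -> locally x (fun u => a <= u).
Proof.
  intros Hx. apply (filter_imp (fun u => a < u)); [intros; lra |].
  apply open_gt, Hx.
Qed.

Lemma C1_on_is_derive (D : R -> Prop) (f df : R -> R) (x : R) :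
  C1_on D f df -> D x -> locally x D -> is_derive f x (df x).
Proof.
  intros Hf Hx HD. apply (is_derive_of_has_deriv_within D); [exact HD | apply Hf, Hx].
Qed.

Lemma C1_on_continuity_pt (D : R -> Prop) (f df : R -> R) (x : R) :
  C1_on D f df -> D x -> locally x D -> continuity_pt f x.
Proof.
  intros Hf Hx HD. apply continuity_pt_filterlim, (ex_derive_continuous (V := R_NormedModule)).
  exists (df x). apply (C1_on_is_derive D); assumption.
Qed.

Lemma C1_on_history (h t : R) (f df : R -> R) : 0 <= t ->
  C1_on (fun u => -h <= u) f df -> C1_on (seg h) (fun s => f (t + s)) (fun s => df (t + s)).
Proof.
  intros Ht Hf x Hx. unfold seg in Hx. destruct (Hf (t + x)) as [Hd Hc]; [lra |].
  assert (Hball : forall e y, ball x e y -> ball (t + x) e (t + y)).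
  { intros e y Hy. change (Rabs (t + y - (t + x)) < e).
    replace (t + y - (t + x)) with (y - x) by ring. exact Hy. }
  split.
  - apply filterlim_locally. intros eps.
    destruct (proj1 (filterlim_locally _ _) Hd eps) as [del Hdel].
    exists del. intros y Hy [Hsy Hyx]. unfold seg in Hsy.
    specialize (Hdel _ (Hball _ _ Hy) ltac:(lra)).
    replace (t + y - (t + x)) with (y - x) in Hdel by ring. exact Hdel.
  - apply filterlim_locally. intros eps.
    destruct (proj1 (filterlim_locally _ _) Hc eps) as [del Hdel].
    exists del. intros y Hy Hsy. unfold seg in Hsy.
    exact (Hdel _ (Hball _ _ Hy) ltac:(lra)).
Qed.

Lemma C1_on_const (D : R -> Prop) (c : R) : C1_on D (fun _ => c) (fun _ => 0).
Proof.
  intros x _. split; apply filterlim_locally; intros eps;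
    exists (mkposreal 1 Rlt_0_1); intros y _ _.
  - unfold Rdiv. rewrite Rminus_diag, Rmult_0_l. apply ball_center.
  - apply ball_center.
Qed.

Lemma MVT_le (f df : R -> R) (a b C : R) : a <= b ->
  (forall x, a <= x <= b -> is_derive f x (df x)) ->
  (forall x, a <= x <= b -> df x <= C) -> f b - f a <= C * (b - a).
Proof.
  intros Hab Hd HC.
  destruct (MVT_gen f a b df) as [c [Hc ->]];
    rewrite Rmin_left, Rmax_right in * by exact Hab.
  - intros x Hx. apply Hd. lra.
  - intros x Hx. apply continuity_pt_filterlim, (ex_derive_continuous (V := R_NormedModule)).
    exists (df x). apply Hd, Hx.
  - apply Rmult_le_compat_r; [lra | apply HC, Hc].
Qed.

Lemma MVT_ge (f df : R -> R) (a b C : R) : a <= b ->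
  (forall x, a <= x <= b -> is_derive f x (df x)) ->
  (forall x, a <= x <= b -> C <= df x) -> C * (b - a) <= f b - f a.
Proof.
  intros Hab Hd HC.
  assert (H := MVT_le (fun x => - f x) (fun x => - df x) a b (- C) Hab).
  assert (- f b - - f a <= - C * (b - a)); [| lra].
  apply H; [intros x Hx; apply (is_derive_opp f), Hd, Hx |].
  intros x Hx. specialize (HC x Hx). lra.
Qed.

Lemma exp_le_1 (x : R) : x <= 0 -> exp x <= 1.
Proof.
  intros Hx. rewrite <- exp_0. destruct (Rle_lt_or_eq_dec x 0 Hx) as [Hlt | ->]; [| lra].
  left. apply exp_increasing, Hlt.
Qed.

Lemma linear_ode_comparison (f df : R -> R) (mu A T0 : R) : 0 < mu -> 0 <= A ->
  (forall t, T0 <= t -> is_derive f t (df t)) ->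
  (forall t, T0 <= t -> df t <= A - mu * f t) ->
  forall t, T0 <= t -> f t <= A / mu + f T0 * exp (- mu * (t - T0)).
Proof.
  intros Hmu HA Hd Hle t Ht.
  set (g := fun s => (f s - A / mu) * exp (mu * (s - T0))).
  (* [g] is nonincreasing since [g' = (f' + mu f - A) exp (mu (s - T0)) <= 0]. *)
  assert (Hg : g t - g T0 <= 0 * (t - T0)).
  { apply (MVT_le g (fun s => (df s + mu * f s - A) * exp (mu * (s - T0)))); [exact Ht | |].
    - intros x Hx. unfold g. auto_derive; [exists (df x); apply Hd; lra |].
      change (Derive (fun y => f y) x) with (Derive f x).
      rewrite (is_derive_unique f x (df x)) by (apply Hd; lra).
      replace (x + - T0) with (x - T0) by ring. field. lra.
    - intros x Hx. specialize (Hle x ltac:(lra)).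
      apply Rmult_le_0_r; [lra | left; apply exp_pos]. }
  unfold g in Hg. rewrite Rminus_diag, Rmult_0_r, exp_0 in Hg.
  assert (Hinv : exp (mu * (t - T0)) * exp (- mu * (t - T0)) = 1).
  { rewrite <- exp_plus, <- exp_0. f_equal. ring. }
  assert (He := exp_pos (- mu * (t - T0))).
  assert (He1 : exp (- mu * (t - T0)) <= 1) by (apply exp_le_1; nra).
  assert (HAmu : 0 <= A / mu) by (apply Rdiv_le_0_compat; lra).
  assert (Hscaled : (f t - A / mu) * exp (mu * (t - T0)) * exp (- mu * (t - T0))
                    <= (f T0 - A / mu) * exp (- mu * (t - T0)))
    by (apply Rmult_le_compat_r; lra).
  rewrite Rmult_assoc, Hinv in Hscaled. nra.
Qed.

Lemma is_lim_exp_decay (mu T C : R) : 0 < mu ->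
  is_lim (fun t => C * exp (- mu * (t - T))) p_infty 0.
Proof.
  intros Hmu. replace (Finite 0) with (Rbar_mult C 0) by (simpl; f_equal; ring).
  apply is_lim_scal_l, (is_lim_comp exp _ _ _ m_infty); [exact is_lim_exp_m | |].
  - apply is_lim_spec. intros M. exists (T - M / mu). intros t Ht.
    apply (Rmult_lt_compat_l mu) in Ht; [| exact Hmu].
    replace (mu * (T - M / mu)) with (mu * T - M) in Ht by (field; lra). simpl. lra.
  - exists 0. intros t _. discriminate.
Qed.

Lemma linear_ode_is_lim_0 (f df g : R -> R) (mu T0 : R) : 0 < mu ->
  (forall t, T0 <= t -> is_derive f t (df t)) ->
  (forall t, T0 <= t -> 0 <= f t) ->
  (forall t, T0 <= t -> df t <= g t - mu * f t) ->
  is_lim g p_infty 0 -> is_lim f p_infty 0.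
Proof.
  intros Hmu Hd Hf0 Hle Hg. apply is_lim_spec in Hg. apply is_lim_spec. intros eps.
  assert (Heps := cond_pos eps).
  assert (Hmeps : 0 < mu * eps / 2) by (apply Rdiv_lt_0_compat; [nra | lra]).
  destruct (Hg (mkposreal _ Hmeps)) as [Mg HMg]. simpl in HMg.
  set (T1 := Rmax Mg T0 + 1).
  pose proof (Rmax_l Mg T0). pose proof (Rmax_r Mg T0).
  assert (Hcmp := linear_ode_comparison f df mu (mu * eps / 2) T1 Hmu ltac:(lra)
    ltac:(intros; apply Hd; unfold T1 in *; lra)).
  specialize (Hcmp ltac:(intros t Ht; specialize (HMg t ltac:(unfold T1 in *; lra));
    specialize (Hle t ltac:(unfold T1 in *; lra)); apply Rabs_lt_between in HMg; lra)).
  destruct (proj2 (is_lim_spec _ _ _) (is_lim_exp_decay mu T1 (f T1) Hmu) (pos_div_2 eps))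
    as [Me HMe].
  exists (Rmax Me T1). intros t Ht. simpl in HMe.
  pose proof (Rmax_l Me T1). pose proof (Rmax_r Me T1).
  specialize (HMe t ltac:(lra)). specialize (Hcmp t ltac:(lra)).
  specialize (Hf0 t ltac:(unfold T1 in *; lra)).
  replace (mu * eps / 2 / mu) with (eps / 2) in Hcmp by (field; lra).
  apply Rabs_lt_between in HMe. rewrite Rminus_0_r, Rabs_pos_eq; lra.
Qed.

Lemma nonincreasing_is_lim (f : R -> R) (a m : R) :
  (forall x y, a <= x <= y -> f y <= f x) -> (forall t, a <= t -> m <= f t) ->
  exists l, m <= l /\ (forall t, a <= t -> l <= f t) /\ is_lim f p_infty l.
Proof.
  intros Hdec Hm.
  set (E := fun x => exists t, a <= t /\ x = - f t).
  destruct (completeness E) as [u [Hub Hlub]].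
  - exists (- m). intros x [t [Ht ->]]. specialize (Hm t Ht). lra.
  - exists (- f a), a. split; [lra | reflexivity].
  - assert (Hlow : forall t, a <= t -> - u <= f t).
    { intros t Ht. assert (- f t <= u) by (apply Hub; exists t; auto). lra. }
    exists (- u). split; [| split; [exact Hlow |]].
    + assert (u <= - m); [| lra].
      apply Hlub. intros x [t [Ht ->]]. specialize (Hm t Ht). lra.
    + apply is_lim_spec. intros eps. assert (Heps := cond_pos eps).
      destruct (classic (exists t, a <= t /\ f t < - u + eps)) as [[t0 [Ht0 Hft0]] | Hno].
      * exists t0. intros t Ht. specialize (Hdec t0 t ltac:(lra)). specialize (Hlow t ltac:(lra)).
        rewrite Rabs_pos_eq; lra.
      * exfalso. assert (u <= u - eps); [| lra].
        apply Hlub. intros x [t [Ht ->]].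
        destruct (Rlt_le_dec (f t) (- u + eps)) as [Hlt | Hge]; [| lra].
        exfalso. apply Hno. exists t. auto.
Qed.

Lemma derive_lim_nonpos_of_bounded_above (f df : R -> R) (T0 B c : R) :
  (forall t, T0 <= t -> is_derive f t (df t)) -> (forall t, T0 <= t -> f t <= B) ->
  is_lim df p_infty c -> c <= 0.
Proof.
  intros Hd HB Hc. apply Rnot_lt_le. intros Hc0.
  apply is_lim_spec in Hc. destruct (Hc (mkposreal (c / 2) ltac:(lra))) as [M HM]. simpl in HM.
  set (T := Rmax M T0 + 1).
  pose proof (Rmax_l M T0). pose proof (Rmax_r M T0).
  set (s := T + 2 * (B - f T) / c + 2).
  assert (HfT : f T <= B) by (apply HB; unfold T; lra).
  assert (Hs : 0 <= 2 * (B - f T) / c) by (apply Rdiv_le_0_compat; lra).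
  assert (Hgrowth : c / 2 * (s - T) <= f s - f T).
  { apply (MVT_ge f df); [unfold s; lra | intros x Hx; apply Hd; unfold T in *; lra |].
    intros x Hx. specialize (HM x ltac:(unfold T in *; lra)).
    apply Rabs_lt_between in HM. lra. }
  replace (c / 2 * (s - T)) with (B - f T + c) in Hgrowth by (unfold s; field; lra).
  specialize (HB s ltac:(unfold s, T in *; lra)). lra.
Qed.

Lemma continuity_pt_nonpos (f : R -> R) (x : R) :
  continuity_pt f x -> (forall y, x < y -> f y < 0) -> f x <= 0.
Proof.
  intros Hc Hneg. apply Rnot_lt_le. intros Hpos.
  apply continuity_pt_filterlim in Hc.
  destruct (proj1 (filterlim_locally _ _) Hc (mkposreal _ Hpos)) as [d Hd].
  assert (Hd0 := cond_pos d).
  assert (Hball : ball x d (x + d / 2)).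
  { change (Rabs (x + d / 2 - x) < d). rewrite Rabs_pos_eq; lra. }
  specialize (Hd _ Hball). change (Rabs (f (x + d / 2) - f x) < f x) in Hd.
  apply Rabs_lt_between in Hd. specialize (Hneg (x + d / 2) ltac:(lra)). lra.
Qed.

Lemma continuity_neg_bounded_away (f : R -> R) (a b : R) :
  (forall x, a <= x <= b -> continuity_pt f x) -> (forall x, a <= x <= b -> f x < 0) ->
  exists m, 0 < m /\ forall x, a <= x <= b -> f x <= - m.
Proof.
  intros Hc Hneg. destruct (Rle_lt_dec a b) as [Hab | Hba].
  - destruct (continuity_ab_maj f a b Hab Hc) as [x0 [Hmax Hx0]].
    exists (- f x0). split; [specialize (Hneg x0 Hx0); lra |].
    intros x Hx. rewrite Ropp_involutive. apply Hmax, Hx.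
  - exists 1. split; [lra | intros x Hx; lra].
Qed.

Section Solution.

Variables (h mu Q : R) (q : R -> R) (j : (R -> R) -> (R -> R) -> R).
Variables (w dw v dv : R -> R).

Hypothesis Hh : 0 < h.
Hypothesis Hmu : 0 < mu.
Hypothesis Hq_bdd : forall s, 0 <= s -> Rabs (q s) <= Q.
Hypothesis Hq_cont : forall s, 0 <= s -> continuity_pt q s.
Hypothesis Hq_neg : forall s, 0 < s -> q s < 0.
Hypothesis Hj_lip : j_loc_lip h j.
Hypothesis Hj_nonneg : j_nonneg h j.
Hypothesis Hj_bdd : j_bdd_images h j.
Hypothesis Hj_small : forall eps, 0 < eps -> exists del, 0 < del /\
  forall p dp r dr, inUplus h p dp r dr -> norm0 h p <= del -> j p r <= eps.
Hypothesis Hj_pos : forall c, 0 < c -> 0 < j (fun _ => c) (fun _ => 0).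

Hypothesis Hw : C1_on (fun t => -h <= t) w dw.
Hypothesis Hv : C1_on (fun t => -h <= t) v dv.
Hypothesis Hnn : forall t, -h <= t -> 0 <= w t /\ 0 <= v t.

Let J (t : R) : R := j (fun s => w (t + s)) (fun s => v (t + s)).

Hypothesis Hdw : forall t, 0 <= t -> dw t = q (v t) * w t.
Hypothesis Hdv : forall t, 0 <= t -> dv t = J t - mu * v t.

Lemma is_derive_w t : 0 <= t -> is_derive w t (dw t).
Proof.
  intros Ht. apply (C1_on_is_derive _ _ _ _ Hw); [lra | apply locally_halfline; lra].
Qed.

Lemma is_derive_v t : 0 <= t -> is_derive v t (dv t).
Proof.
  intros Ht. apply (C1_on_is_derive _ _ _ _ Hv); [lra | apply locally_halfline; lra].
Qed.

Lemma Q_nonneg : 0 <= Q.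
Proof. pose proof (Hq_bdd 0 (Rle_refl 0)). pose proof (Rabs_pos (q 0)). lra. Qed.

Lemma q_nonpos s : 0 <= s -> q s <= 0.
Proof.
  intros Hs. destruct (Rle_lt_or_eq_dec 0 s Hs) as [Hs0 | <-]; [left; apply Hq_neg, Hs0 |].
  apply continuity_pt_nonpos; [apply Hq_cont, Rle_refl | exact Hq_neg].
Qed.

Lemma w_nonincreasing a b : 0 <= a <= b -> w b <= w a.
Proof.
  intros Hab. assert (w b - w a <= 0 * (b - a)); [| lra].
  apply (MVT_le w dw); [lra | intros x Hx; apply is_derive_w; lra |].
  intros x Hx. rewrite Hdw by lra.
  pose proof (q_nonpos (v x) ltac:(apply Hnn; lra)). pose proof (Hnn x ltac:(lra)). nra.
Qed.

Lemma w_le_w0 t : 0 <= t -> 0 <= w t <= w 0.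
Proof. intros Ht. split; [apply Hnn; lra | apply w_nonincreasing; lra]. Qed.

Lemma abs_dw_le t : 0 <= t -> Rabs (dw t) <= Q * w t.
Proof.
  intros Ht. rewrite Hdw, Rabs_mult, (Rabs_pos_eq (w t)) by (try apply Hnn; lra).
  apply Rmult_le_compat_r; [apply Hnn; lra | apply Hq_bdd, Hnn; lra].
Qed.

Lemma history_inUplus t : 0 <= t ->
  inUplus h (fun s => w (t + s)) (fun s => dw (t + s)) (fun s => v (t + s)) (fun s => dv (t + s)).
Proof.
  intros Ht. split; [| split]; try (apply C1_on_history; assumption).
  intros s Hs. apply Hnn. unfold seg in Hs. lra.
Qed.

Lemma J_nonneg t : 0 <= t -> 0 <= J t.
Proof. intros Ht. exact (Hj_nonneg _ _ _ _ (history_inUplus t Ht)). Qed.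

Lemma J_bounded : exists K, 0 <= K /\ forall t, h <= t -> J t <= K.
Proof.
  destruct (Hj_bdd
    (fun p dp => exists t, h <= t /\ p = (fun s => w (t + s)) /\ dp = (fun s => dw (t + s)))
    (fun r dr => exists t, h <= t /\ r = (fun s => v (t + s)) /\ dr = (fun s => dv (t + s))))
    as [K HK].
  - intros p dp [t [Ht [-> ->]]]. split; [apply C1_on_history; [lra | exact Hw] |].
    intros s Hs. apply Hnn. unfold seg in Hs. lra.
  - intros r dr [t [Ht [-> ->]]]. split; [apply C1_on_history; [lra | exact Hv] |].
    intros s Hs. apply Hnn. unfold seg in Hs. lra.
  - exists (w 0 + Q * w 0). intros p dp [t [Ht [-> ->]]].
    assert (Hs : forall s, seg h s -> 0 <= t + s) by (unfold seg; intros; lra).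
    destruct (norm0_le h (w 0) (fun s => w (t + s))); [lra | |].
    { intros s Hseg. pose proof (w_le_w0 _ (Hs s Hseg)). rewrite Rabs_pos_eq; lra. }
    destruct (norm0_le h (Q * w 0) (fun s => dw (t + s))); [lra | |]; [| lra].
    intros s Hseg. eapply Rle_trans; [apply abs_dw_le, Hs, Hseg |].
    apply Rmult_le_compat_l; [apply Q_nonneg | apply w_le_w0, Hs, Hseg].
  - assert (HJK : forall t, h <= t -> J t <= K).
    { intros t Ht. eapply Rle_trans; [apply Rle_abs |].
      apply (HK _ (fun s => dw (t + s)) _ (fun s => dv (t + s))); exists t; auto. }
    exists K. split; [| exact HJK].
    pose proof (HJK h (Rle_refl h)). pose proof (J_nonneg h). lra.
Qed.

Lemma v_bounded : exists B, forall t, h <= t -> v t <= B.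
Proof.
  destruct J_bounded as [K [HK0 HK]].
  exists (K / mu + v h). intros t Ht.
  assert (Hcmp := linear_ode_comparison v dv mu K h Hmu HK0
    ltac:(intros; apply is_derive_v; lra)
    ltac:(intros s Hs; rewrite Hdv by lra; specialize (HK s Hs); lra) t Ht).
  assert (Hexp : exp (- mu * (t - h)) <= 1) by (apply exp_le_1; nra).
  pose proof (Hnn h ltac:(lra)). nra.
Qed.

Lemma dv_bounded : exists D, 0 < D /\ forall t, h <= t -> Rabs (dv t) <= D.
Proof.
  destruct J_bounded as [K [HK0 HK]]. destruct v_bounded as [B HB].
  assert (HB0 : 0 <= B) by (pose proof (HB h (Rle_refl h)); pose proof (Hnn h); lra).
  exists (K + mu * B + 1). split; [nra |]. intros t Ht.
  rewrite Hdv by lra. apply Rabs_le.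
  pose proof (HK t Ht). pose proof (J_nonneg t). pose proof (HB t Ht). pose proof (Hnn t).
  split; nra.
Qed.

(* [v] and [v'] are only bounded from time [h] on, so the window [t - h, t] must start there. *)
Lemma history_norm1_bounded : exists M, forall t, 2 * h <= t ->
  norm1p h (fun s => w (t + s)) (fun s => dw (t + s)) (fun s => v (t + s)) (fun s => dv (t + s))
    <= M.
Proof.
  destruct v_bounded as [B HB]. destruct dv_bounded as [D [HD0 HD]].
  exists (w 0 + B + (Q * w 0 + D)). intros t Ht. unfold norm1p.
  assert (Hs : forall s, seg h s -> h <= t + s /\ 0 <= t + s) by (unfold seg; intros; lra).
  pose proof Q_nonneg. pose proof (w_le_w0 0 (Rle_refl 0)).
  destruct (norm0p_le h (w 0 + B) (fun s => w (t + s)) (fun s => v (t + s))); [lra | |].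
  { intros s Hseg. destruct (Hs s Hseg) as [Hh1 Hh2]. pose proof (w_le_w0 _ Hh2).
    pose proof (Hnn (t + s) ltac:(lra)). pose proof (HB _ Hh1).
    rewrite !Rabs_pos_eq by lra. lra. }
  destruct (norm0p_le h (Q * w 0 + D) (fun s => dw (t + s)) (fun s => dv (t + s))); [lra | |].
  { intros s Hseg. destruct (Hs s Hseg) as [Hh1 Hh2]. pose proof (HD _ Hh1).
    pose proof (abs_dw_le _ Hh2). pose proof (w_le_w0 _ Hh2).
    assert (Q * w (t + s) <= Q * w 0) by (apply Rmult_le_compat_l; lra).
    assert (0 <= Q * w 0) by (apply Rmult_le_pos; lra). lra. }
  lra.
Qed.

Lemma w_has_limit : exists l, 0 <= l /\ (forall t, 0 <= t -> l <= w t) /\ is_lim w p_infty l.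
Proof.
  apply nonincreasing_is_lim; [intros; apply w_nonincreasing; lra | intros; apply Hnn; lra].
Qed.

Lemma v_tends_to_0_of_w_limit_pos l : 0 < l -> (forall t, 0 <= t -> l <= w t) ->
  is_lim w p_infty l -> is_lim v p_infty 0.
Proof.
  intros Hl Hlow Hlim. apply is_lim_spec in Hlim. apply is_lim_spec. intros a.
  assert (Ha := cond_pos a).
  destruct v_bounded as [B HB]. destruct dv_bounded as [D [HD0 HD]].
  destruct (continuity_neg_bounded_away q (a / 2) (Rmax a B)) as [m [Hm Hqm]].
  { intros; apply Hq_cont; lra. }
  { intros; apply Hq_neg; lra. }
  set (tau := a / (2 * D)).
  assert (Htau : 0 < tau) by (apply Rdiv_lt_0_compat; lra).
  assert (Heta : 0 < m * l * tau) by (apply Rmult_lt_0_compat; nra).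
  destruct (Hlim (mkposreal _ Heta)) as [M HM]. simpl in HM.
  exists (Rmax M h). intros t Ht.
  pose proof (Rmax_l M h). pose proof (Rmax_r M h). pose proof (Hnn t ltac:(lra)).
  rewrite Rminus_0_r, Rabs_pos_eq by lra.
  apply Rnot_le_lt. intros Hva.
  (* [v] stays above [a/2] on [t, t + tau], which forces [w] to drop by [m l tau]. *)
  assert (Hv_large : forall s, t <= s <= t + tau -> a / 2 <= v s).
  { intros s Hs.
    assert (- D * (s - t) <= v s - v t).
    { apply (MVT_ge v dv); [lra | intros x Hx; apply is_derive_v; lra |].
      intros x Hx. specialize (HD x ltac:(lra)). apply Rabs_le_between in HD. lra. }
    assert (D * (s - t) <= D * tau) by (apply Rmult_le_compat_l; lra).
    replace (D * tau) with (a / 2) in * by (unfold tau; field; lra). lra. }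
  assert (Hw_drop : w (t + tau) - w t <= - (m * l) * (t + tau - t)).
  { apply (MVT_le w dw); [lra | intros x Hx; apply is_derive_w; lra |].
    intros x Hx. rewrite Hdw by lra.
    assert (q (v x) <= - m).
    { apply Hqm. split; [apply Hv_large, Hx |].
      eapply Rle_trans; [apply HB; lra | apply Rmax_r]. }
    pose proof (Hlow x ltac:(lra)). nra. }
  specialize (HM t ltac:(lra)). apply Rabs_lt_between in HM.
  pose proof (Hlow (t + tau) ltac:(lra)). lra.
Qed.

Lemma J_tends_to_j_const l : 0 <= l -> is_lim w p_infty l -> is_lim v p_infty 0 ->
  is_lim J p_infty (j (fun _ => l) (fun _ => 0)).
Proof.
  intros Hl Hwl Hv0.
  set (c := j (fun _ => l) (fun _ => 0)).
  destruct history_norm1_bounded as [M HM].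
  destruct (Hj_lip (Rmax M l)) as [L HL].
  set (N := fun t => norm0p h (fun s => w (t + s) - l) (fun s => v (t + s) - 0)).
  assert (HN : is_lim (fun t => L * N t) p_infty 0).
  { replace (Finite 0) with (Rbar_mult L 0) by (simpl; f_equal; ring).
    apply is_lim_scal_l, (is_lim_norm0p_history h (fun t => w t - l) (fun t => v t - 0));
      [lra | | apply (is_lim_ext (fun t => v t)); [intros; ring | exact Hv0]].
    replace (Finite 0) with (Finite (l - l)) by (f_equal; ring).
    apply is_lim_minus'; [exact Hwl | apply is_lim_const]. }
  assert (Hconst : inUplus h (fun _ => l) (fun _ => 0) (fun _ => 0) (fun _ => 0)).
  { split; [apply C1_on_const | split; [apply C1_on_const | intros; lra]]. }
  assert (Hconst_norm : norm1p h (fun _ => l) (fun _ => 0) (fun _ => 0) (fun _ => 0) <= l).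
  { unfold norm1p.
    destruct (norm0p_le h l (fun _ => l) (fun _ => 0)); [lra | |].
    { intros; rewrite Rabs_R0, Rabs_pos_eq; lra. }
    destruct (norm0p_le h 0 (fun _ => 0) (fun _ => 0)); [lra | |]; [| lra].
    intros; rewrite Rabs_R0; lra. }
  apply (is_lim_le_le_loc (fun t => c - L * N t) (fun t => c + L * N t)).
  - exists (2 * h). intros t Ht.
    assert (Hlip := HL _ _ _ _ _ _ _ _ (history_inUplus t ltac:(lra)) Hconst
      ltac:(eapply Rle_trans; [apply HM; lra | apply Rmax_l])
      ltac:(eapply Rle_trans; [exact Hconst_norm | apply Rmax_r])).
    apply Rabs_le_between in Hlip. fold (J t) c (N t) in Hlip. lra.
  - replace (Finite c) with (Finite (c - 0)) by (f_equal; ring).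
    apply is_lim_minus'; [apply is_lim_const | exact HN].
  - replace (Finite c) with (Finite (c + 0)) by (f_equal; ring).
    apply is_lim_plus'; [apply is_lim_const | exact HN].
Qed.

Lemma w_tends_to_0 : is_lim w p_infty 0.
Proof.
  destruct w_has_limit as [l [Hl [Hlow Hlim]]].
  destruct (Rle_lt_or_eq_dec 0 l Hl) as [Hpos | <-]; [exfalso | exact Hlim].
  assert (Hv0 := v_tends_to_0_of_w_limit_pos l Hpos Hlow Hlim).
  set (c := j (fun _ => l) (fun _ => 0)).
  (* Otherwise [v' = J - mu v] would tend to [c > 0] while [v] stays bounded. *)
  assert (Hdv_lim : is_lim dv p_infty (c - mu * 0)).
  { apply (is_lim_ext_loc (fun t => J t - mu * v t)).
    - exists 0. intros t Ht. symmetry. apply Hdv. lra.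
    - apply is_lim_minus'; [exact (J_tends_to_j_const l Hl Hlim Hv0) |].
      exact (is_lim_scal_l v mu p_infty 0 Hv0). }
  destruct v_bounded as [B HB].
  assert (Hc := derive_lim_nonpos_of_bounded_above v dv h B _
    ltac:(intros; apply is_derive_v; lra) HB Hdv_lim).
  assert (0 < c) by (apply Hj_pos, Hpos). lra.
Qed.

Lemma J_tends_to_0 : is_lim J p_infty 0.
Proof.
  assert (Hw0 := w_tends_to_0). apply is_lim_spec in Hw0. apply is_lim_spec. intros eps.
  assert (Heps := cond_pos eps).
  destruct (Hj_small (eps / 2) ltac:(lra)) as [del [Hdel HJ]].
  destruct (Hw0 (mkposreal del Hdel)) as [M HM]. simpl in HM.
  exists (Rmax M 0 + h). intros t Ht.
  pose proof (Rmax_l M 0). pose proof (Rmax_r M 0).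
  assert (HJt : J t <= eps / 2).
  { apply (HJ _ (fun s => dw (t + s)) _ (fun s => dv (t + s)));
      [apply history_inUplus; lra |].
    apply norm0_le; [lra |]. intros s Hs. unfold seg in Hs.
    specialize (HM (t + s) ltac:(lra)). rewrite Rminus_0_r in HM. lra. }
  pose proof (J_nonneg t ltac:(lra)). rewrite Rminus_0_r, Rabs_pos_eq; lra.
Qed.

Lemma v_tends_to_0 : is_lim v p_infty 0.
Proof.
  apply (linear_ode_is_lim_0 v dv J mu 0 Hmu); [exact is_derive_v | | | exact J_tends_to_0].
  - intros; apply Hnn; lra.
  - intros t Ht. rewrite Hdv by exact Ht. lra.
Qed.

Lemma dw_tends_to_0 : is_lim dw p_infty 0.
Proof.
  assert (HQw : is_lim (fun t => Q * w t) p_infty 0).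
  { replace (Finite 0) with (Rbar_mult Q 0) by (simpl; f_equal; ring).
    apply is_lim_scal_l, w_tends_to_0. }
  apply (is_lim_le_le_loc (fun t => - (Q * w t)) (fun t => Q * w t)); [| | exact HQw].
  - exists 0. intros t Ht. apply Rabs_le_between, abs_dw_le. lra.
  - replace (Finite 0) with (Rbar_opp 0) by (simpl; f_equal; ring). apply is_lim_opp, HQw.
Qed.

Lemma dv_tends_to_0 : is_lim dv p_infty 0.
Proof.
  apply (is_lim_ext_loc (fun t => J t - mu * v t)); [exists 0; intros; symmetry; apply Hdv; lra |].
  replace (Finite 0) with (Finite (0 - mu * 0)) by (f_equal; ring).
  apply is_lim_minus'; [exact J_tends_to_0 | exact (is_lim_scal_l v mu p_infty 0 v_tends_to_0)].
Qed.

Theorem solution_history_tends_to_0 :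
  is_lim (fun t => norm0p h (fun s => w (t + s)) (fun s => v (t + s))) p_infty 0 /\
  is_lim (fun t => norm1p h (fun s => w (t + s)) (fun s => dw (t + s))
                            (fun s => v (t + s)) (fun s => dv (t + s))) p_infty 0.
Proof.
  assert (Hh0 : 0 <= h) by lra.
  split; [exact (is_lim_norm0p_history h w v Hh0 w_tends_to_0 v_tends_to_0) |].
  replace (Finite 0) with (Finite (0 + 0)) by (f_equal; ring).
  apply is_lim_plus'; apply is_lim_norm0p_history; auto using w_tends_to_0, v_tends_to_0,
    dw_tends_to_0, dv_tends_to_0.
Qed.

End Solution.

Theorem proposition2
  (h Rm mu : R) (q : R -> R) (j : (R -> R) -> (R -> R) -> R)
  (Hh : 0 < h) (HRm : Rm < 0) (Hmu : 0 < mu)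
  (Hj_wd : j_welldef h j)
  (Hj_C1 : j_smooth_ext h Rm j)
  (Hj_lip : j_loc_lip h j)
  (Hj_nonneg : j_nonneg h j)
  (Hj_bdd : j_bdd_images h j)
  (Hq_bdd : exists Q, forall s, Rm < s -> Rabs (q s) <= Q)
  (Hq_C1 : exists dq, C1_on (fun s => Rm < s) q dq)
  (Hq_neg : forall s, 0 < s -> q s < 0)
  (H1 : forall eps, 0 < eps -> exists del, 0 < del /\
          forall p dp r dr, inUplus h p dp r dr ->
            norm0 h p <= del -> j p r <= eps)
  (H2 : forall c, 0 < c -> 0 < j (fun _ => c) (fun _ => 0)) :
  forall p dp r dr, inXplus h mu q j p dp r dr ->
  forall w dw v dv, is_solution h Rm mu q j w dw v dv ->
  (forall s, seg h s -> w s = p s /\ v s = r s) ->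
  (* solutions from X_+ remain nonnegative (standing assumption) *)
  (forall t, -h <= t -> 0 <= w t /\ 0 <= v t) ->
  is_lim (fun t => norm0p h (fun s => w (t + s)) (fun s => v (t + s)))
         p_infty (Finite 0) /\
  is_lim (fun t => norm1p h (fun s => w (t + s)) (fun s => dw (t + s))
                            (fun s => v (t + s)) (fun s => dv (t + s)))
         p_infty (Finite 0).
Proof.
  intros p dp r dr _ w dw v dv [Hw [Hv [_ Heq]]] _ Hnn.
  destruct Hq_bdd as [Q HQ]. destruct Hq_C1 as [dq Hdq].
  apply (solution_history_tends_to_0 h mu Q q j w dw v dv); try assumption.
  - intros s Hs. apply HQ. lra.
  - intros s Hs. apply (C1_on_continuity_pt _ _ _ _ Hdq); [lra |].
    apply open_gt. lra.
  - intros t Ht. apply (Heq t Ht).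
  - intros t Ht. apply (Heq t Ht).
Qed.
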